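(* Let $R$ be a ring with identity, let ${}_RM$ be a semisimple left $R$-module and let $\varphi:M\to M$ be a nonzero nilpotent $R$-endomorphism. Then the following are equivalent: (1) there is a nilpotent Jordan normal base $\{x_i\mid 1\le i\le n\}$ of ${}_RM$ with respect to $\varphi$ consisting of one block (i.e. $x_{i+1}=\varphi(x_i)$ for $1\le i<n$ and $\varphi(x_n)=0$); (2) $\varphi$ is an indecomposable nilpotent element of the ring $\mathrm{Hom}_R(M,M)$; (3) ${}_RM$ is finitely generated and $\varphi^{d-1}\neq0$, where $d=\dim_R(M)$ is the composition length of ${}_RM$.
   Context: For an $R$-endomorphism $\varphi$ of a left $R$-module ${}_RM$, a subset $\{x_{\gamma,i}\mid\gamma\in\Gamma,1\le i\le k_\gamma\}\subseteq M$ (with integers $k_\gamma\ge1$) is a nilpotent Jordan normal base of ${}_RM$ with respect to $\varphi$ if each submodule $Rx_{\gamma,i}$ is simple, $M=\bigoplus_{\gamma,i}Rx_{\gamma,i}$ is a direct sum, $\varphi(x_{\gamma,i})=x_{\gamma,i+1}$ for $1\le i<k_\gamma$, $\varphi(x_{\gamma,k_\gamma})=0$, and $\{k_\gamma\mid\gamma\in\Gamma\}$ is bounded; $\Gamma$ is the set of blocks. A nilpotent element $s$ of a ring $S$ is decomposable if $es=se$ for some idempotent $e\in S$ with $0\ne e\ne1$; a nilpotent element which is not decomposable is indecomposable. *)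

From HB Require Import structures.
From mathcomp Require Import all_boot all_order all_algebra.
Set Implicit Arguments. Unset Strict Implicit. Unset Printing Implicit Defensive.
Import GRing.Theory.
Local Open Scope ring_scope.

Section ModuleDefs.
Variables (R : pzRingType) (M : lmodType R).

Definition submodule (S : M -> Prop) : Prop :=
  [/\ S 0, (forall x y, S x -> S y -> S (x + y)) & (forall (r : R) x, S x -> S (r *: x))].

Definition simple_submodule (S : M -> Prop) : Prop :=
  [/\ submodule S, (exists2 x, S x & x <> 0) &
      forall N : M -> Prop, submodule N -> (forall x, N x -> S x) ->
        (forall x, N x -> x = 0) \/ (forall x, S x -> N x)].

Definition cyclic_submodule (x : M) : M -> Prop := fun y => exists r : R, y = r *: x.

Definition direct_sum_cyclic (J : Type) (P : J -> Prop) (y : J -> M) : Prop :=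
  (forall m : M, exists n (f : 'I_n -> J) (r : 'I_n -> R),
       (forall i, P (f i)) /\ m = \sum_(i < n) r i *: y (f i)) /\
  (forall n (f : 'I_n -> J) (r : 'I_n -> R), injective f -> (forall i, P (f i)) ->
       \sum_(i < n) r i *: y (f i) = 0 -> forall i, r i *: y (f i) = 0).

Definition semisimple : Prop :=
  forall m : M, exists n (S : 'I_n -> M -> Prop) (v : 'I_n -> M),
    [/\ forall i, simple_submodule (S i), forall i, S i (v i) & m = \sum_(i < n) v i].

Definition finitely_generated : Prop :=
  exists n (g : 'I_n -> M), forall m : M, exists r : 'I_n -> R, m = \sum_(i < n) r i *: g i.

Definition composition_length (d : nat) : Prop :=
  exists N : nat -> M -> Prop,
    [/\ forall i, submodule (N i),
        forall x, N 0%N x -> x = 0,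
        forall x, N d x &
        forall i, (i < d)%N ->
          [/\ forall x, N i x -> N i.+1 x,
              (exists2 x, N i.+1 x & ~ N i x) &
              forall L : M -> Prop, submodule L ->
                (forall x, N i x -> L x) -> (forall x, L x -> N i.+1 x) ->
                (forall x, L x -> N i x) \/ (forall x, N i.+1 x -> L x)]].

Definition nilpotent_endo (phi : M -> M) : Prop :=
  exists n, forall x, iter n phi x = 0.

Definition nilpotent_jordan_base (phi : M -> M)
    (Gamma : Type) (k : Gamma -> nat) (x : Gamma -> nat -> M) : Prop :=
  [/\ forall g, (1 <= k g)%N,
      forall g i, (1 <= i <= k g)%N -> simple_submodule (cyclic_submodule (x g i)),
      direct_sum_cyclic (fun p : Gamma * nat => (1 <= p.2 <= k p.1)%N)
                        (fun p => x p.1 p.2),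
      (forall g i, (1 <= i < k g)%N -> phi (x g i) = x g i.+1) &
      (forall g, phi (x g (k g)) = 0) /\
      exists B, forall g, (k g <= B)%N].

Definition decomposable_nilpotent (s : {linear M -> M}) : Prop :=
  nilpotent_endo s /\
  exists e : {linear M -> M},
    [/\ forall x, e (e x) = e x, ~ (forall x, e x = 0), ~ (forall x, e x = x) &
        forall x, e (s x) = s (e x)].

Definition indecomposable_nilpotent (s : {linear M -> M}) : Prop :=
  nilpotent_endo s /\ ~ decomposable_nilpotent s.

End ModuleDefs.

From HB Require Import structures.
From mathcomp Require Import all_boot all_order all_algebra zify.
From mathcomp Require Import boolp classical_sets.

(* Let n be the nilpotency index of phi.  Some summand x0 of a decomposition of M into simple
   modules has phi^(n-1) x0 <> 0, and then x0, phi x0, ..., phi^(n-1) x0 all have the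
   annihilator of x0 and are independent, so their span C is a one-block Jordan chain.  Each
   of (1), (2), (3) is equivalent to C = M.  If C = M, the kernels of the powers of phi form a
   composition series of length n, and ker phi = R phi^(n-1) x0 is simple, so it cannot meet
   both the image and the kernel of an idempotent commuting with phi.  If C <> M, a maximal
   phi-invariant submodule A meeting C only in 0 (Zorn) satisfies A + C = M, because M is
   generated by simple modules and preimages under phi can be corrected inside C; the
   projection onto A then decomposes phi.  Also, the kernels of the powers of phi on C,
   followed by M, form a strict chain of length n + 1, which exceeds the composition length
   d <= n. *)

Set Implicit Arguments. Unset Strict Implicit. Unset Printing Implicit Defensive.
Import GRing.Theory.
Local Open Scope ring_scope.
Local Open Scope classical_set_scope.

Lemma exists_switch (P : nat -> Prop) m : ~ P 0%N -> P m -> exists k, ~ P k /\ P k.+1.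
Proof.
move=> P0; elim: m => [//|m IH] Pm1.
by have [/IH|] := pselect (P m); last by exists m.
Qed.

Section Submodules.
Variables (R : pzRingType) (M : lmodType R).
Implicit Types (A B : set M) (x : M).

Lemma submoduleN A x : submodule A -> A x -> A (- x).
Proof. by case=> _ _ AZ Ax; rewrite -scaleN1r; apply: AZ. Qed.

Lemma submoduleB A x y : submodule A -> A x -> A y -> A (x - y).
Proof. by move=> sA Ax Ay; case: (sA) => _ AD _; apply: AD => //; apply: submoduleN. Qed.

Lemma submodule_sum A n (v : 'I_n -> M) :
  submodule A -> (forall i, A (v i)) -> A (\sum_(i < n) v i).
Proof. by case=> A0 AD _ Av; apply: (big_ind A). Qed.

Lemma submoduleI A B : submodule A -> submodule B -> submodule (A `&` B).
Proof.
move=> [A0 AD AZ] [B0 BD BZ]; split=> [//|x y [? ?] [? ?]|r x [? ?]]; split.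
all: by [apply: AD | apply: BD | apply: AZ | apply: BZ].
Qed.

Lemma submoduleD A B :
  submodule A -> submodule B -> submodule [set a + b | a in A & b in B].
Proof.
move=> [A0 AD AZ] [B0 BD BZ]; split.
- by exists 0 => //; exists 0 => //; rewrite addr0.
- move=> _ _ [a1 ? [b1 ? <-]] [a2 ? [b2 ? <-]].
  by exists (a1 + a2); [exact: AD | exists (b1 + b2); [exact: BD | rewrite addrACA]].
- move=> r _ [a ? [b ? <-]].
  by exists (r *: a); [exact: AZ | exists (r *: b); [exact: BZ | rewrite scalerDr]].
Qed.

Lemma submodule_cyclic x : submodule (cyclic_submodule x).
Proof.
split; first by exists 0; rewrite scale0r.
- by move=> _ _ [r ->] [s ->]; exists (r + s); rewrite scalerDl.
- by move=> r _ [s ->]; exists (r * s); rewrite scalerA.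
Qed.

(* R x is simple or zero: every nonzero multiple of x generates x back *)
Definition simple_generator x :=
  forall r : R, r *: x <> 0 -> exists s : R, s *: (r *: x) = x.

Lemma simple_submodule_generator (S : set M) x :
  simple_submodule S -> S x -> simple_generator x.
Proof.
case=> [[_ _ SZ] _ Smin] Sx r rx0.
have /Smin[] : cyclic_submodule (r *: x) `<=` S by move=> _ [s ->]; rewrite scalerA; apply: SZ.
- exact: submodule_cyclic.
- by move=> /(_ (r *: x)) rx; exfalso; apply/rx0/rx; exists 1; rewrite scale1r.
- by move=> /(_ x Sx) [s sE]; exists s; rewrite -sE.
Qed.

Lemma simple_cyclicP x :
  simple_submodule (cyclic_submodule x) <-> x <> 0 /\ simple_generator x.
Proof.
split=> [Sx | [x0 gx]].
  split; last by apply: simple_submodule_generator Sx _; exists 1; rewrite scale1r.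
  by case: Sx => _ [_ [r ->] rx0] _ x0; apply: rx0; rewrite x0 scaler0.
split; [exact: submodule_cyclic | by exists x => //; exists 1; rewrite scale1r |].
move=> N [_ _ NZ] NS; have [N0|/existsNP[z /not_implyP[Nz z0]]] :=
  pselect (forall z, N z -> z = 0); first by left.
right=> _ [t ->]; have [r zE] := NS z Nz; rewrite zE in Nz z0.
by have [s sE] := gx r z0; rewrite -sE scalerA; apply: NZ.
Qed.

Lemma sum_scale_fibers n m (g : 'I_m -> nat) (r : 'I_m -> R) (Y : nat -> M) :
  (forall i, (g i < n)%N) ->
  \sum_(i < m) r i *: Y (g i) = \sum_(j < n) (\sum_(i < m | g i == j) r i) *: Y j.
Proof.
move=> gn; rewrite (partition_big (fun i => Ordinal (gn i)) xpredT) //=.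
apply: eq_bigr => j _; rewrite scaler_suml; apply: eq_big => [i|i /eqP <-] //.
Qed.

End Submodules.

Section CompositionSeries.
Variables (R : pzRingType) (M : lmodType R).
Implicit Types (A B P Q : set M) (L N : nat -> set M).

Definition maximal_in Q P := forall L : set M,
  submodule L -> Q `<=` L -> L `<=` P -> L `<=` Q \/ P `<=` L.

(* Q + A = P by maximality of Q, so B = A + (B `&` Q) = A by the modular law *)
Lemma maximal_in_modular P Q A B :
  submodule P -> submodule Q -> submodule A -> submodule B -> Q `<=` P -> maximal_in Q P ->
  A `<=` B -> B `<=` P -> ~ A `<=` Q -> B `&` Q `<=` A -> B `<=` A.
Proof.
move=> sP sQ sA sB QP maxQ AB BP AQ BQA b Bb.
pose QA := [set q + a | q in Q & a in A].
have QQA : Q `<=` QA by move=> q Qq; exists q => //; exists 0; [case: sA | rewrite addr0].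
have QAP : QA `<=` P.
  by move=> _ [q Qq [a Aa <-]]; case: sP => _ PD _; apply: PD; [exact: QP | exact/BP/AB].
have [QAQ|PL] := maxQ _ (submoduleD sQ sA) QQA QAP.
  by exfalso; apply: AQ => a Aa; apply: QAQ; exists 0; [case: sQ | exists a; rewrite ?add0r].
have [q Qq [a Aa bE]] := PL b (BP b Bb).
have Bq : B q.
  by rewrite (_ : q = b - a); [apply: submoduleB => //; exact: AB | rewrite -bE addrK].
by case: sA => _ AD _; rewrite -bE; apply: AD => //; apply: BQA.
Qed.

Definition strict_chain L k :=
  (forall i, submodule (L i)) /\ forall i, (i < k)%N -> L i `<` L i.+1.

Lemma strict_chain_sub L k i j : strict_chain L k -> (i <= j <= k)%N -> L i `<=` L j.
Proof.
move=> [_ Llt] /andP[]; elim: j => [|j IH]; first by rewrite leqn0 => /eqP -> _ ?.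
rewrite leq_eqVlt => /orP[/eqP -> _ ? //|ij] jk.
exact: subset_trans (IH ij (ltnW jk)) (properW (Llt j jk)).
Qed.

Lemma strict_chain_extend L k P :
  strict_chain L k -> submodule P -> L k `<` P ->
  strict_chain (fun i => if (i <= k)%N then L i else P) k.+1.
Proof.
move=> [sL Llt] sP LP; split=> [i|i]; first by case: leqP.
rewrite ltnS leq_eqVlt => /orP[/eqP ->|ik]; first by rewrite eqxx ltnn.
by rewrite ik orbT; exact: Llt.
Qed.

Lemma strict_chain_descend P Q L k :
  submodule P -> submodule Q -> Q `<=` P -> maximal_in Q P ->
  strict_chain L k.+1 -> L k.+1 `<=` P ->
  exists2 L', strict_chain L' k & L' k `<=` Q.
Proof.
move=> sP sQ QP maxQ [sL Llt] LP.
have LP' j : (j <= k.+1)%N -> L j `<=` P.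
  move=> jk; apply: (subset_trans _ LP).
  by apply: (strict_chain_sub (conj sL Llt)); rewrite jk leqnn.
pose L' i := if pselect (L i `<=` Q) then L i else L i.+1 `&` Q.
have L'sub i : (i <= k)%N -> L' i `<=` L i.+1 `&` Q.
  rewrite /L' subsetI; case: pselect => /= LQ ik; first by split=> //; exact: properW (Llt i ik).
  by split; [exact: subIsetl | exact: subIsetr].
exists L'; last by apply: subset_trans (L'sub k (leqnn k)) (@subIsetr _ _ _).
split=> [i|i ik]; first by rewrite /L'; case: pselect => /= _; [exact: sL | exact: submoduleI].
rewrite {2}/L'; case: pselect => /= LQ.
  have LQi : L i `<=` Q by exact: subset_trans (properW (Llt i (ltnW ik))) LQ.
  by rewrite /L'; case: pselect => /= [_|/(_ LQi) []]; exact: Llt (ltnW ik).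
split.
  apply: subset_trans (L'sub i (ltnW ik)) _.
  by apply: setSI; exact: properW (Llt i.+1 ik).
move=> L'L; apply: (Llt i.+1 ik).2.
apply: (maximal_in_modular sP sQ (sL _) (sL _) QP maxQ) => //; first exact: properW (Llt i.+1 ik).
  exact: LP'.
by move=> x Lx; have [] := L'sub i (ltnW ik) x (L'L x Lx).
Qed.

Definition composition_series N d :=
  [/\ strict_chain N d, N 0%N `<=` [set 0] & forall i, (i < d)%N -> maximal_in (N i) (N i.+1)].

Lemma strict_chain_length N d L k :
  composition_series N d -> strict_chain L k -> L k `<=` N d -> (k <= d)%N.
Proof.
elim: d L k => [|d IH] L [|k] // [cN N0 Nmax] cL LN.
  have [sL Llt] := cL; exfalso; apply: (Llt 0%N isT).2 => x L1x.
  have L1k : L 1%N `<=` L k.+1 by apply: strict_chain_sub cL _; rewrite leqnn.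
  have /N0 -> : N 0%N x by exact/LN/L1k.
  by case: (sL 0%N).
have [sN Nlt] := cN; have dd : (d < d.+1)%N by [].
have [L' cL' L'N] := strict_chain_descend (sN _) (sN _) (properW (Nlt d dd)) (Nmax d dd) cL LN.
apply: IH cL' L'N; split=> //; last by move=> i id; apply: Nmax; rewrite ltnW.
by split=> // i id; apply: Nlt; rewrite ltnW.
Qed.

Lemma composition_length_strict_chain d L k :
  composition_length M d -> strict_chain L k -> (k <= d)%N.
Proof.
case=> N [sN N0 Nd Nst] cL; apply: (strict_chain_length (N := N)) cL _ => //.
split=> //; last by move=> i /Nst[_ _ ?].
by split=> // i /Nst[NN [x Nx Nnx] _]; split=> // /(_ x Nx).
Qed.

End CompositionSeries.

Section Iterates.
Variables (R : pzRingType) (M : lmodType R) (phi : {linear M -> M}).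

Lemma linear_iter0 k : iter k phi 0 = 0.
Proof. by elim: k => //= k ->; rewrite linear0. Qed.

Lemma linear_iterD k x y : iter k phi (x + y) = iter k phi x + iter k phi y.
Proof. by elim: k => //= k ->; rewrite linearD. Qed.

Lemma linear_iterZ k (r : R) x : iter k phi (r *: x) = r *: iter k phi x.
Proof. by elim: k => //= k ->; rewrite linearZ. Qed.

Lemma linear_iter_sum k m (F : 'I_m -> M) :
  iter k phi (\sum_(i < m) F i) = \sum_(i < m) iter k phi (F i).
Proof. exact: (big_morph _ (linear_iterD k) (linear_iter0 k)). Qed.

Lemma simple_generator_iter k x : simple_generator x -> simple_generator (iter k phi x).
Proof.
move=> gx r rx0; have /gx[s sE] : r *: x <> 0.
  by move=> rx; apply: rx0; rewrite -linear_iterZ rx linear_iter0.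
by exists s; rewrite -!linear_iterZ sE.
Qed.

Lemma last_nonzero_iter x m : x <> 0 -> iter m phi x = 0 ->
  exists k, iter k phi x <> 0 /\ phi (iter k phi x) = 0.
Proof.
move=> x0 xm; have [k []] := exists_switch (P := fun k => iter k phi x = 0) x0 xm.
by exists k.
Qed.

Lemma submodule_iter_kernel k : submodule [set a | iter k phi a = 0].
Proof.
split=> [|a b /= ha hb|r a /= ha]; first exact: linear_iter0.
  by rewrite linear_iterD ha hb addr0.
by rewrite linear_iterZ ha scaler0.
Qed.

(* the empty set qualifies, which lets Zorn's lemma apply to unions of chains *)
Definition invariant_closed (A : set M) :=
  [/\ forall x y, A x -> A y -> A (x + y), forall (r : R) x, A x -> A (r *: x)
    & forall x, A x -> A (phi x)].

Lemma invariant_closed_iter A k x : invariant_closed A -> A x -> A (iter k phi x).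
Proof. by case=> _ _ Aphi; elim: k => //= k IH /IH; apply: Aphi. Qed.

Lemma invariant_closed_submodule A : invariant_closed A -> A 0 -> submodule A.
Proof. by case. Qed.

Lemma exists_maximal_invariant_disjoint (C : set M) :
  exists A, (invariant_closed A /\ A `&` C `<=` [set 0]) /\
    forall B, A `<` B -> ~ (invariant_closed B /\ B `&` C `<=` [set 0]).
Proof.
apply: Zorn_bigcup => F FP Ftot; split; last first.
  by move=> x [[A FA Ax] Cx]; have [_] := FP A FA; apply; split.
split=> [x y [A FA Ax] [B FB By]|r x [A FA Ax]|x [A FA Ax]].
- have [AB|BA] := Ftot A B FA FB.
    by exists B => //; have [[BD _ _] _] := FP B FB; apply: BD => //; exact: AB.
  by exists A => //; have [[AD _ _] _] := FP A FA; apply: AD => //; exact: BA.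
- by exists A => //; have [[_ AZ _] _] := FP A FA; exact: AZ.
- by exists A => //; have [[_ _ Aphi] _] := FP A FA; exact: Aphi.
Qed.

Lemma invariant_closed_line A m : invariant_closed A -> A (phi m) ->
  invariant_closed [set a + t *: m | a in A & t in [set: R]].
Proof.
move=> [AD AZ Aphi] Am; split.
- move=> _ _ [a1 A1 [t1 _ <-]] [a2 A2 [t2 _ <-]].
  by exists (a1 + a2); [exact: AD | exists (t1 + t2) => //; rewrite scalerDl addrACA].
- move=> r _ [a Aa [t _ <-]].
  by exists (r *: a); [exact: AZ | exists (r * t) => //; rewrite scalerDr scalerA].
- move=> _ [a Aa [t _ <-]]; exists (phi a + t *: phi m).
    by apply: AD; [exact: Aphi | exact: AZ].
  by exists 0 => //; rewrite scale0r addr0 linearD linearZ.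
Qed.

Section Chain.
Variables (x0 : M) (n : nat).
Hypotheses (gx0 : simple_generator x0) (top_neq0 : iter n.-1 phi x0 <> 0).
Hypothesis top_ker : iter n phi x0 = 0.

Local Notation x_ j := (iter j phi x0).

Definition chain_span : set M := [set a | exists s : nat -> R, a = \sum_(j < n) s j *: x_ j].

Lemma chain_gt0 : (0 < n)%N.
Proof. by case: n top_neq0 top_ker. Qed.

Let top_lt : (n.-1 < n)%N. Proof. by rewrite prednK ?chain_gt0. Qed.

Lemma chain_vanish j : (n <= j)%N -> x_ j = 0.
Proof. by move=> nj; rewrite -(subnK nj) iterD top_ker linear_iter0. Qed.

Lemma chain_ann j (r : R) : (j < n)%N -> r *: x_ j = 0 <-> r *: x0 = 0.
Proof.
move=> jn; split=> [rxj | rx0]; last by rewrite -linear_iterZ rx0 linear_iter0.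
apply: contra_notP top_neq0 => /gx0[s sE].
have jn' : (j <= n.-1)%N by rewrite -ltnS prednK ?chain_gt0.
by rewrite -sE -(subnK jn') iterD 3!linear_iterZ rxj linear_iter0 scaler0.
Qed.

Lemma chain_neq0 j : (j < n)%N -> x_ j <> 0.
Proof.
move=> jn xj0; apply: top_neq0.
have jn' : (j <= n.-1)%N by rewrite -ltnS prednK ?chain_gt0.
by rewrite -(subnK jn') iterD xj0 linear_iter0.
Qed.

Lemma chain_free k (s : nat -> R) : \sum_(j < n) s j *: x_ (k + j) = 0 ->
  forall j, (k + j < n)%N -> s j *: x_ j = 0.
Proof.
move=> s0 j; elim/ltn_ind: j => j IH kjn; have jn : (j < n)%N by lia.
have := congr1 (iter (n.-1 - (k + j)) phi) s0.
rewrite linear_iter0 linear_iter_sum (bigD1 (Ordinal jn)) //= big1 ?addr0 => [|i /negbTE ij].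
  by rewrite linear_iterZ -iterD subnK; [move/(chain_ann _ top_lt)/(chain_ann _ jn) | lia].
have [ltij|ltji|eqij] := ltngtP i j; last by rewrite -val_eqE /= eqij eqxx in ij.
  have kin : (k + i < n)%N by lia.
  have /(chain_ann _ (ltn_ord i))/(chain_ann _ kin) -> : s i *: x_ i = 0 by apply: IH => //; lia.
  exact: linear_iter0.
by rewrite linear_iterZ -iterD chain_vanish ?scaler0 //; lia.
Qed.

Lemma chain_span_submodule : submodule chain_span.
Proof.
split.
- by exists (fun=> 0); rewrite big1 // => i _; rewrite scale0r.
- move=> _ _ [s ->] [t ->]; exists (fun j => s j + t j).
  by rewrite -big_split; apply: eq_bigr => i _; rewrite scalerDl.
- move=> r _ [s ->]; exists (fun j => r * s j).
  by rewrite scaler_sumr; apply: eq_bigr => i _; rewrite scalerA.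
Qed.

Lemma chain_span_iter j : chain_span (x_ j).
Proof.
have [jn|nj] := ltnP j n; last by rewrite chain_vanish //; case: chain_span_submodule.
exists (fun i => (i == j)%:R); rewrite (bigD1 (Ordinal jn)) //= eqxx scale1r big1 ?addr0 //.
by move=> i; rewrite -val_eqE /= => /negbTE ->; rewrite scale0r.
Qed.

Lemma chain_span_phi a : chain_span a -> chain_span (phi a).
Proof.
case=> s ->; rewrite linear_sum; apply: submodule_sum => [|i]; first exact: chain_span_submodule.
by rewrite linearZ; case: chain_span_submodule => _ _; apply; exact: (chain_span_iter i.+1).
Qed.

Lemma chain_span_invariant : invariant_closed chain_span.
Proof. by have [_ ? ?] := chain_span_submodule; split=> //; exact: chain_span_phi. Qed.

Lemma chain_span_nil a : chain_span a -> iter n phi a = 0.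
Proof.
case=> s ->; rewrite linear_iter_sum big1 // => i _.
by rewrite linear_iterZ -iterD chain_vanish ?leq_addr ?scaler0.
Qed.

Lemma chain_span_ker a : chain_span a -> phi a = 0 -> exists r, a = r *: x_ n.-1.
Proof.
case=> s -> phi0; exists (s n.-1); rewrite (bigD1 (Ordinal top_lt)) //= big1 ?addr0 // => j.
rewrite -val_eqE /= => jn; apply: (chain_free (k := 1)); last by have := ltn_ord j; lia.
by rewrite -[RHS]phi0 linear_sum; apply: eq_bigr => i _; rewrite linearZ.
Qed.

Lemma chain_span_preimage a : chain_span a -> iter n.-1 phi a = 0 ->
  exists2 b, chain_span b & phi b = a /\ forall r : R, r *: a = 0 -> r *: b = 0.
Proof.
case=> s -> top_a; have n_gt0 := chain_gt0.
have s0 : s 0%N *: x0 = 0.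
  apply: (chain_free (k := n.-1) _ (_ : n.-1 + 0 < n)%N); last by rewrite addn0.
  by rewrite -[RHS]top_a linear_iter_sum; apply: eq_bigr => j _; rewrite linear_iterZ iterD.
exists (\sum_(j < n.-1) s j.+1 *: x_ j).
  apply: submodule_sum => [|j]; first exact: chain_span_submodule.
  by case: chain_span_submodule => _ _; apply; exact: chain_span_iter.
split=> [|r ra].
  rewrite linear_sum -[in RHS](prednK n_gt0) big_ord_recl /= s0 add0r.
  by apply: eq_bigr => j _; rewrite linearZ.
rewrite scaler_sumr big1 // => j _; rewrite scalerA.
have jn : (j.+1 < n)%N by have := ltn_ord j; lia.
apply/(chain_ann _ (ltn_trans (ltnSn j) jn))/(chain_ann _ jn).
apply: (chain_free (k := 0) (s := fun i => r * s i)) => //.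
by rewrite -[RHS]ra scaler_sumr; apply: eq_bigr => i _; rewrite scalerA.
Qed.

Lemma chain_kernel_witness i : (i < n)%N ->
  iter i.+1 phi (x_ (n.-1 - i)) = 0 /\ iter i phi (x_ (n.-1 - i)) <> 0.
Proof.
move=> ilt; rewrite -!iterD; split; first by apply: chain_vanish; lia.
by apply: chain_neq0; lia.
Qed.

Lemma chain_kernel_strict :
  strict_chain (fun i => chain_span `&` [set a | iter i phi a = 0]) n.
Proof.
split=> [i|i ilt]; first exact: submoduleI chain_span_submodule (submodule_iter_kernel i).
split=> [a [Ca /= ai]|]; first by split=> //=; rewrite ai linear0.
have [top_i top_i1] := chain_kernel_witness ilt.
by move=> /(_ (x_ (n.-1 - i)) (conj (chain_span_iter _) top_i)) [].
Qed.

Section FullChain.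
Hypothesis full : forall m, chain_span m.

Lemma full_chain_jordan_base :
  exists (Gamma : Type) (k : Gamma -> nat) (x : Gamma -> nat -> M),
    nilpotent_jordan_base phi k x /\ exists g0 : Gamma, forall g, g = g0.
Proof.
have n_gt0 := chain_gt0.
exists unit, (fun=> n), (fun _ i => x_ i.-1); split; last by exists tt; case.
split=> //.
- move=> _ i /andP[i_gt0 i_le]; apply/simple_cyclicP.
  by split; [apply: chain_neq0; lia | exact: simple_generator_iter].
- split=> [m | m f r finj fP sum0 i0].
    have [s ->] := full m; exists n, (fun j : 'I_n => (tt, j.+1)), (fun j => s j).
    by split=> // j; rewrite /= ltn_ord.
  pose g i := (f i).2.-1; have gn i : (g i < n)%N by have := fP i; rewrite /g; lia.
  have ginj : injective g.
    move=> i1 i2; rewrite /g => e; apply: finj; move: (fP i1) (fP i2) e.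
    by case: (f i1) (f i2) => [[] a] [[] b] /= ha hb e; congr (_, _); lia.
  rewrite (sum_scale_fibers r (fun j => x_ j) gn) in sum0.
  have := chain_free (k := 0) (s := fun j => \sum_(i < m | g i == j) r i) sum0 (gn i0).
  by rewrite (big_pred1 i0) // => j; exact: inj_eq.
- by move=> _ [|i].
- by split; [rewrite /= -top_ker -{2}(prednK n_gt0) | exists n].
Qed.

Lemma full_chain_finitely_generated : finitely_generated M.
Proof. by exists n, (fun i : 'I_n => x_ i) => m; have [s ->] := full m; exists (fun i => s i). Qed.

Lemma full_chain_ker_maximal i : (i < n)%N ->
  maximal_in [set a | iter i phi a = 0] [set a | iter i.+1 phi a = 0].
Proof.
move=> ilt L [_ LD LZ] kerL Lker.
have [LQ|/existsNP[y /not_implyP[Ly yi]]] := pselect (L `<=` [set a | iter i phi a = 0]).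
  by left.
right=> z zi.
have [r rE] := chain_span_ker (full (iter i phi y)) (Lker y Ly).
have [t tE] := chain_span_ker (full (iter i phi z)) zi.
have rx : r *: x_ n.-1 <> 0 by rewrite -rE.
have [u uE] := simple_generator_iter (k := n.-1) gx0 rx.
have -> : z = (z - (t * u) *: y) + (t * u) *: y by rewrite subrK.
apply: LD; last exact: LZ.
apply: kerL; rewrite /= linear_iterD -scaleNr linear_iterZ rE tE.
by rewrite scaleNr -scalerA uE subrr.
Qed.

Lemma full_chain_composition_length : composition_length M n.
Proof.
exists (fun i => [set a | iter i phi a = 0]); split=> //.
- exact: submodule_iter_kernel.
- by move=> m; apply/chain_span_nil/full.
- move=> i ilt; split; last exact: full_chain_ker_maximal.
    by move=> a /= ha; rewrite ha linear0.
  by have [? ?] := chain_kernel_witness ilt; exists (x_ (n.-1 - i)).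
Qed.

Lemma full_chain_indecomposable : indecomposable_nilpotent phi.
Proof.
have nil_n m : iter n phi m = 0 := chain_span_nil (full m).
split; first by exists n.
case=> _ [e [eK e0 e1 ephi]].
have e_iter k v : e (iter k phi v) = iter k phi (e v) by elim: k => //= k <-.
have [y ey] : exists y, e y <> 0 by apply/existsNP.
have [z ez] : exists z, z - e z <> 0.
  by apply/existsNP => ez; apply: e1 => z; apply/esym/eqP; rewrite -subr_eq0; apply/eqP.
have [k [yk0 yk1]] := last_nonzero_iter ey (nil_n (e y)).
have [k' [zk0 zk1]] := last_nonzero_iter ez (nil_n (z - e z)).
have [r rE] := chain_span_ker (full _) yk1.
have [t tE] := chain_span_ker (full _) zk1.
have tx : t *: x_ n.-1 <> 0 by rewrite -tE.
have [u uE] := simple_generator_iter (k := n.-1) gx0 tx.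
have img : e (iter k phi (e y)) = iter k phi (e y) by rewrite e_iter eK.
have ker : e (iter k' phi (z - e z)) = 0 by rewrite e_iter linearB eK subrr linear_iter0.
by apply: yk0; rewrite -img rE -uE -tE scalerA linearZZ ker scaler0.
Qed.

End FullChain.

End Chain.

Definition single_chain x0 n :=
  [/\ simple_generator x0, iter n.-1 phi x0 <> 0, iter n phi x0 = 0
    & forall m, chain_span x0 n m].

Lemma nilpotent_top_chain : semisimple M -> nilpotent_endo phi -> (exists x, phi x <> 0) ->
  exists x0 n, [/\ simple_generator x0, iter n.-1 phi x0 <> 0 & forall m, iter n phi m = 0].
Proof.
move=> ss [N nilN] [x phix].
have M_nontrivial : ~ forall m, iter 0 phi m = 0.
  by move=> /(_ x) /= x0; rewrite x0 linear0 in phix.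
have [k [/existsNP[m mk] nil_k1]] :=
  exists_switch (P := fun k => forall m, iter k phi m = 0) M_nontrivial nilN.
have [p [S [v [Ssimple Sv mE]]]] := ss m.
have [i vi] : exists i, iter k phi (v i) <> 0.
  by apply/existsNP => v0; apply: mk; rewrite mE linear_iter_sum big1.
by exists (v i), k.+1; split=> //; exact: simple_submodule_generator (Ssimple i) (Sv i).
Qed.

Lemma jordan_base_single_chain :
  (exists (Gamma : Type) (k : Gamma -> nat) (x : Gamma -> nat -> M),
    nilpotent_jordan_base phi k x /\ exists g0 : Gamma, forall g, g = g0) ->
  exists x0 n, single_chain x0 n.
Proof.
case=> Gamma [k [x [[k_gt0 simple [span _] step [last _]] [g0 one]]]].
have k0_gt0 := k_gt0 g0.
have xE j : (j < k g0)%N -> x g0 j.+1 = iter j phi (x g0 1%N).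
  by elim: j => [//|j IH] jk; rewrite -step ?IH //=; lia.
have xk : x g0 (k g0) = iter (k g0).-1 phi (x g0 1%N) by rewrite -xE prednK ?ltn_predL.
have /simple_cyclicP[top0 _] : simple_submodule (cyclic_submodule (x g0 (k g0))).
  by apply: simple; rewrite k0_gt0 leqnn.
have /simple_cyclicP[_ gx] : simple_submodule (cyclic_submodule (x g0 1%N)) by apply: simple.
exists (x g0 1%N), (k g0); split=> //; first by rewrite -xk.
  by rewrite -(prednK k0_gt0) /= -xk last.
move=> m; have [p [f [r [fP ->]]]] := span m.
pose g i := (f i).2.-1.
have fP' i : (0 < (f i).2 <= k g0)%N by rewrite -(one (f i).1); exact: fP.
have gk i : (g i < k g0)%N by have := fP' i; rewrite /g; lia.
exists (fun j => \sum_(i < p | g i == j) r i).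
rewrite -(sum_scale_fibers r (fun j => iter j phi (x g0 1%N)) gk).
apply: eq_bigr => i _ /=; have [fi_gt0 _] := andP (fP' i).
rewrite /g -xE; last by have := fP' i; lia.
by rewrite prednK // (one (f i).1).
Qed.

Lemma invariant_complements_decomposable A B :
  nilpotent_endo phi -> invariant_closed A -> invariant_closed B ->
  A `&` B `<=` [set 0] -> (forall m, [set a + b | a in A & b in B] m) ->
  (exists2 a, A a & a <> 0) -> (exists2 b, B b & b <> 0) ->
  decomposable_nilpotent phi.
Proof.
move=> nilp Ainv Binv AB0 cover [a0 Aa0 a0_neq0] [b0 Bb0 b0_neq0].
have [AD AZ Aphi] := Ainv; have [BD BZ Bphi] := Binv.
have A0 : A 0 by rewrite -(scale0r a0); exact: AZ.
have B0 : B 0 by rewrite -(scale0r b0); exact: BZ.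
have BB x y : B x -> B y -> B (x - y).
  by move=> Bx By; apply: BD => //; rewrite -scaleN1r; exact: BZ.
have proj m : exists a, A a /\ B (m - a).
  by have [a Aa [b Bb <-]] := cover m; exists a; rewrite addrC addKr.
pose e m := proj1_sig (cid (proj m)).
have eP m : A (e m) /\ B (m - e m) := proj2_sig (cid (proj m)).
have e_uniq m a : A a -> B (m - a) -> e m = a.
  move=> Aa Ba; have [Aem Bem] := eP m; apply/eqP; rewrite -subr_eq0; apply/eqP/AB0; split.
    by apply: AD => //; rewrite -scaleN1r; exact: AZ.
  have -> : e m - a = (m - a) - (m - e m) by rewrite opprB [RHS]addrC addrA subrK.
  exact: BB.
have eD x y : e (x + y) = e x + e y.
  have [? ?] := eP x; have [? ?] := eP y.
  by apply: e_uniq; [exact: AD | rewrite opprD addrACA; exact: BD].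
have eZ (r : R) x : e (r *: x) = r *: e x.
  by have [? ?] := eP x; apply: e_uniq; [exact: AZ | rewrite -scalerBr; exact: BZ].
have e_linear : linear e by move=> r x y; rewrite eD eZ.
pose e' : {linear M -> M} := HB.pack e (GRing.isLinear.Build R M M *:%R e e_linear).
split=> //; exists e'; split=> /=.
- by move=> x; have [Aex _] := eP x; apply: e_uniq; rewrite ?subrr.
- by move=> /(_ a0); rewrite (e_uniq a0 a0) ?subrr.
- by move=> /(_ b0); rewrite (e_uniq b0 0) ?subr0 // => /esym.
- by move=> x; have [? ?] := eP x; apply: e_uniq; [exact: Aphi | rewrite -linearB; exact: Bphi].
Qed.

Section MaximalComplement.
Variables (x0 : M) (n : nat).
Hypotheses (gx0 : simple_generator x0) (top_neq0 : iter n.-1 phi x0 <> 0).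
Hypothesis nil_n : forall m, iter n phi m = 0.
Local Notation C := (chain_span x0 n).
Variable A : set M.
Hypotheses (Ainv : invariant_closed A) (AC : A `&` C `<=` [set 0]).
Hypothesis Amax : forall B, A `<` B -> ~ (invariant_closed B /\ B `&` C `<=` [set 0]).

Local Notation A_plus_C := [set c + a | c in A & a in C].

Lemma maximal_complement0 : A 0.
Proof.
have [AD AZ Aphi] := Ainv; apply: contrapT => A0.
apply: (Amax (B := A `|` [set 0])); first by split=> [x|/(_ 0 (or_intror erefl))]; [left|].
split; first split.
- move=> x y [Ax|->] [Ay|->]; rewrite ?addr0 ?add0r; by [left; apply: AD | left | left | right].
- by move=> r x [Ax|->]; [left; exact: AZ | right; exact: scaler0].
- by move=> x [Ax|->]; [left; exact: Aphi | right; exact: linear0].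
- by move=> x [[Ax|->] Cx] //; exact: AC.
Qed.

Let sA : submodule A := invariant_closed_submodule Ainv maximal_complement0.
Let sC : submodule C := chain_span_submodule x0 n.

Lemma maximal_complement_direct c a : A c -> C a -> c + a = 0 -> c = 0 /\ a = 0.
Proof.
move=> Ac Ca ca0; have c0 : c = 0.
  apply: AC; split=> //; rewrite (_ : c = - a); first exact: submoduleN.
  by apply/eqP; rewrite -subr_eq0 opprK ca0.
by split=> //; rewrite c0 add0r in ca0.
Qed.

(* Writing phi w = c + a, one has a = phi b with b in C and ann w <= ann (w - b); then
   A + R (w - b) is still invariant and meets C trivially, so w - b lies in A. *)
Lemma maximal_complement_pullback w : simple_generator w -> A_plus_C (phi w) -> A_plus_C w.
Proof.
move=> gw [c Ac [a Ca phiw]]; apply: contrapT => wAC.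
have [AD AZ _] := Ainv; have [_ CD CZ] := sC.
have a_top : iter n.-1 phi a = 0.
  have : iter n.-1 phi c + iter n.-1 phi a = 0.
    by rewrite -linear_iterD phiw -iterSr prednK ?nil_n // (chain_gt0 top_neq0 (nil_n x0)).
  have Ak := invariant_closed_iter n.-1 Ainv Ac.
  have Ck := invariant_closed_iter n.-1 (chain_span_invariant (nil_n x0)) Ca.
  by case/(maximal_complement_direct Ak Ck).
have [b Cb [phib ann]] := chain_span_preimage gx0 top_neq0 (nil_n x0) Ca a_top.
pose m := w - b.
have phim : phi m = c by rewrite linearB phib -phiw addrK.
have ann_m r : r *: w = 0 -> r *: m = 0.
  move=> rw; have : r *: c + r *: a = 0 by rewrite -scalerDr phiw -linearZ rw linear0.
  case/(maximal_complement_direct (AZ r c Ac) (CZ r a Ca)) => _ /ann rb.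
  by rewrite /m scalerBr rw rb subrr.
pose B := [set c' + t *: m | c' in A & t in [set: R]].
have AB : A `<=` B by move=> y Ay; exists y => //; exists 0 => //; rewrite scale0r addr0.
have Binv : invariant_closed B by apply: invariant_closed_line; rewrite ?phim.
have BC : B `&` C `<=` [set 0].
  move=> _ [[c' Ac' [t _ <-]] Cy].
  have tw : t *: w = 0.
    apply: contrapT => tw; apply: wAC; have [s <-] := gw t tw.
    have [_ _ ACZ] := submoduleD sA sC; apply: ACZ.
    exists (- c'); first exact: submoduleN.
    exists (c' + t *: m + t *: b); first by apply: CD => //; exact: CZ.
    by rewrite -addrA addKr scalerBr subrK.
  by rewrite /= (ann_m t tw) addr0 in Cy *; exact: AC (conj Ac' Cy).
have BA : B `<=` A by apply: contrapT => BA; exact: Amax (conj AB BA) (conj Binv BC).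
apply: wAC; exists m; last by exists b; rewrite // subrK.
by apply: BA; exists 0; [exact: maximal_complement0 | exists 1 => //; rewrite scale1r add0r].
Qed.

Lemma maximal_complement_cover : semisimple M -> forall m, A_plus_C m.
Proof.
move=> ss m; have sAC := submoduleD sA sC; have [AC0 _ _] := sAC.
have [p [S [v [Ssimple Sv ->]]]] := ss m.
apply: (submodule_sum sAC) => i; apply: contrapT => vi.
have vn : A_plus_C (iter n phi (v i)) by rewrite nil_n.
have [k [vk vk1]] := exists_switch (P := fun k => A_plus_C (iter k phi (v i))) vi vn.
apply/vk/maximal_complement_pullback/vk1.
exact/simple_generator_iter/(simple_submodule_generator (Ssimple i) (Sv i)).
Qed.

End MaximalComplement.

Lemma indecomposable_single_chain :
  semisimple M -> nilpotent_endo phi -> (exists x, phi x <> 0) ->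
  indecomposable_nilpotent phi -> exists x0 n, single_chain x0 n.
Proof.
move=> ss nilp nz [_ indec].
have [x0 [n [gx0 top0 nil_n]]] := nilpotent_top_chain ss nilp nz.
exists x0, n; split=> //; apply: contrapT => /existsNP[m Cm].
have [A [[Ainv AC] Amax]] := exists_maximal_invariant_disjoint (chain_span x0 n).
have cover := maximal_complement_cover gx0 top0 nil_n Ainv AC Amax ss.
have Cinv := chain_span_invariant (nil_n x0).
apply/indec/(invariant_complements_decomposable nilp Ainv Cinv AC cover).
  by have [c Ac [a Ca mE]] := cover m; exists c => // c0; apply: Cm; rewrite -mE c0 add0r.
exists x0; first exact: (chain_span_iter (nil_n x0) 0).
exact: (chain_neq0 top0 (nil_n x0) (chain_gt0 top0 (nil_n x0))).
Qed.

Lemma composition_length_single_chain d x :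
  semisimple M -> nilpotent_endo phi -> (exists x, phi x <> 0) ->
  composition_length M d -> iter d.-1 phi x <> 0 -> exists x0 n, single_chain x0 n.
Proof.
move=> ss nilp nz Md xd.
have [x0 [n [gx0 top0 nil_n]]] := nilpotent_top_chain ss nilp nz.
exists x0, n; split=> //; apply: contrapT => /existsNP[m Cm].
have dn : (d <= n)%N.
  rewrite leqNgt; apply/negP => nd; apply: xd.
  by rewrite -(subnK (_ : n <= d.-1)%N) ?iterD ?nil_n ?linear_iter0 //; lia.
have CM : chain_span x0 n `&` [set a | iter n phi a = 0] `<` [set: M].
  by split=> // /(_ m I) [].
have sM : submodule [set: M] by [].
have := strict_chain_extend (chain_kernel_strict top0 (nil_n x0)) sM CM.
by move/(composition_length_strict_chain Md); lia.
Qed.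

End Iterates.

Theorem proposition2p3 (R : pzRingType) (M : lmodType R) (phi : {linear M -> M}) :
  semisimple M ->
  nilpotent_endo phi ->
  (exists x : M, phi x <> 0) ->
  [<-> (exists (Gamma : Type) (k : Gamma -> nat) (x : Gamma -> nat -> M),
          nilpotent_jordan_base phi k x /\ exists g0 : Gamma, forall g, g = g0);
       indecomposable_nilpotent phi;
       finitely_generated M /\
         exists d : nat, composition_length M d /\ exists x : M, iter d.-1 phi x <> 0].
Proof.
move=> ss nilp nz; split; last split.
- case/jordan_base_single_chain=> x0 [n [gx0 top0 topk full]].
  exact: full_chain_indecomposable gx0 top0 topk full.
- case/(indecomposable_single_chain ss nilp nz)=> x0 [n [gx0 top0 topk full]].
  split; first exact: full_chain_finitely_generated full.
  by exists n; split; [exact: full_chain_composition_length gx0 top0 topk full | exists x0].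
- case=> _ [d [Md [x xd]]].
  have [x0 [n [gx0 top0 topk full]]] := composition_length_single_chain ss nilp nz Md xd.
  exact: full_chain_jordan_base gx0 top0 topk full.
Qed.
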